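(* Let $X$ be a Hausdorff space. Assume there is $K\in\mathcal{K}(X)$ such that every clopen subset $U$ of $X$ with $K\subset U$ satisfies $U=X$. Then $\mathcal{C}=\{K\cup\{x\}:x\in X\}$ is a connected subset of $\mathcal{K}(X)$.
   Context: $\mathcal{K}(X)$ is the set of nonempty compact subsets of $X$ with the Vietoris topology (generated by $U^+=\{A: A\subset U\}$ and $U^-=\{A: A\cap U\neq\emptyset\}$ for $U$ open in $X$). *)

From HB Require Import structures.
From mathcomp Require Import all_boot all_order all_algebra.
From mathcomp Require Import all_classical all_reals all_analysis.
Set Implicit Arguments. Unset Strict Implicit. Unset Printing Implicit Defensive.
Local Open Scope classical_set_scope.

(* The hyperspace of X: subsets of X, with the Vietoris topology generated by
   the subbase  U^+ = [set A | A `<=` U]  and  U^- = [set A | A `&` U !=set0]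
   for U open in X.  The space K(X) of nonempty compact subsets carries the
   subspace topology of this space (same subbase, restricted). *)
Definition vietoris (X : topologicalType) : Type := set X.

Definition upper_set (X : topologicalType) (U : set X) : set (vietoris X) :=
  [set A : set X | A `<=` U].
Definition lower_set (X : topologicalType) (U : set X) : set (vietoris X) :=
  [set A : set X | A `&` U !=set0].

Definition vietoris_subbase_index (X : topologicalType) : set (bool * set X) :=
  [set p | open p.2].
Definition vietoris_subbase (X : topologicalType) (p : bool * set X)
  : set (vietoris X) :=
  if p.1 then upper_set p.2 else lower_set p.2.

HB.instance Definition _ (X : topologicalType) := Choice.on (vietoris X).
HB.instance Definition _ (X : topologicalType) :=
  isSubBaseTopological.Build (vietoris X)
    (@vietoris_subbase_index X) (@vietoris_subbase X).

Definition hyperK (X : topologicalType) : set (vietoris X) :=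
  [set A : set X | A !=set0 /\ compact A].

From HB Require Import structures.
From mathcomp Require Import all_boot all_order all_algebra.
From mathcomp Require Import all_classical all_reals all_analysis.
From mathcomp Require Import finmap.
Local Open Scope classical_set_scope.

(* The map x |-> K `|` [set x] is continuous into the Vietoris space, and it is
   constant on K.  Hence a relatively clopen subset of its image pulls back to a
   clopen subset of X that either contains K or misses it; by the hypothesis on
   K this pullback, or its complement, is all of X. *)

Lemma open_bigcap_fset (T : topologicalType) (I : choiceType) (D : {fset I})
    (g : I -> set T) :
  (forall i, i \in D -> open (g i)) -> open (\bigcap_(i in [set` D]) g i).
Proof.
move=> og; rewrite bigcap_fset big_seq.
by apply: (big_ind open openT (@openI T)) => i /og.
Qed.

Lemma vietoris_continuous_subbase (T X : topologicalType) (f : T -> vietoris X) :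
  (forall p, @vietoris_subbase_index X p ->
    open (f @^-1` @vietoris_subbase X p)) ->
  continuous f.
Proof.
move=> osub; apply/continuousP => _ [D sD <-].
rewrite preimage_bigcup; apply: bigcup_open => _ /sD [F sF <-].
rewrite preimage_bigcap; apply: open_bigcap_fset => p Fp.
by apply/osub/set_mem/sF.
Qed.

Section adjoin_point.
Variables (X : topologicalType) (K : set X).

Definition adjoin_point (x : X) : vietoris X := K `|` [set x].

Lemma adjoin_point_id (y : X) : K y -> adjoin_point y = K.
Proof. by move=> Ky; apply/seteqP; split => z; [case => // ->|left]. Qed.

Lemma open_preimage_upper_set (U : set X) :
  open U -> open (adjoin_point @^-1` upper_set U).
Proof.
move=> oU; have [KU|nKU] := pselect (K `<=` U).
  rewrite (_ : _ @^-1` _ = U) //; apply/seteqP; split => x /=.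
    by apply; right.
  by move=> Ux y [/KU //|-> //].
rewrite (_ : _ @^-1` _ = set0); first exact: open0.
by apply/seteqP; split => x //= KxU; apply: nKU => y Ky; apply: KxU; left.
Qed.

Lemma open_preimage_lower_set (U : set X) :
  open U -> open (adjoin_point @^-1` lower_set U).
Proof.
move=> oU; have [[z [Kz Uz]]|nKU] := pselect (K `&` U !=set0).
  rewrite (_ : _ @^-1` _ = setT); first exact: openT.
  by apply/seteqP; split => x // _; exists z; split => //; left.
rewrite (_ : _ @^-1` _ = U) //; apply/seteqP; split => x /=.
  by move=> [y [[Ky|->] Uy]] //; exfalso; apply: nKU; exists y.
by move=> Ux; exists x; split => //; right.
Qed.

Lemma adjoin_point_continuous : continuous adjoin_point.
Proof.
apply: vietoris_continuous_subbase => -[[] U] /= oU.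
- exact: open_preimage_upper_set.
- exact: open_preimage_lower_set.
Qed.

Lemma hyperK_adjoin_point (x : X) : hyperK K -> hyperK (adjoin_point x).
Proof.
move=> [_ cK]; split; first by exists x; right.
by apply: compactU => //; exact: compact_set1.
Qed.

End adjoin_point.

Section connected_range.
Variables (T U : topologicalType) (f : T -> U) (K : set T).
Hypotheses (f_cont : continuous f) (K0 : K !=set0)
  (fK : forall x y, K x -> K y -> f x = f y)
  (K_clopen_full : forall V, clopen V -> K `<=` V -> V = setT).

Lemma clopen_preimage_range (O F : set U) :
  open O -> closed F -> range f `&` O = range f `&` F -> clopen (f @^-1` O).
Proof.
have preimage_sub (P Q : set U) :
    range f `&` P = range f `&` Q -> f @^-1` P `<=` f @^-1` Q.
  move=> PQ x Px.
  by have [] : (range f `&` Q) (f x) by rewrite -PQ; split => //; exists x.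
move=> oO cF OF; split; first exact: (continuousP _).1.
rewrite (_ : f @^-1` O = f @^-1` F).
  by apply: preimage_closed => // x _; exact: f_cont.
by apply/seteqP; split; apply: preimage_sub.
Qed.

Lemma connected_range_const_on : connected (range f).
Proof.
move=> B [b Bb] [V oV BV] [W cW BW].
have clV : clopen (f @^-1` V).
  by apply: clopen_preimage_range oV cW _; rewrite -BV.
have [k Kk] := K0.
have [Vfk|nVfk] := pselect (V (f k)).
  have fullV : f @^-1` V = setT.
    by apply: K_clopen_full => // y Ky; rewrite /= (fK _ _ Ky Kk).
  rewrite BV; apply/seteqP; split => [y [] //|_ [x _ <-]].
  by split; [exists x|rewrite -[V _]/((f @^-1` V) x) fullV].
have fullCV : ~` (f @^-1` V) = setT.
  apply: K_clopen_full; first exact: clopenC.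
  by move=> y Ky; rewrite /= (fK _ _ Ky Kk).
move: Bb; rewrite BV => -[[x _ <-] Vfx].
by have : (~` (f @^-1` V)) x by rewrite fullCV.
Qed.

End connected_range.

Theorem lemma5p1 (X : topologicalType) (K : set X) :
  hausdorff_space X ->
  @hyperK X K ->
  (forall U : set X, clopen U -> K `<=` U -> U = setT) ->
  let C : set (vietoris X) := (fun x : X => (K `|` [set x] : vietoris X)) @` setT in
  C `<=` @hyperK X /\ connected C.
Proof.
move=> _ hK K_clopen_full C; split.
  by move=> _ [x _ <-]; exact: hyperK_adjoin_point.
change (connected (range (@adjoin_point X K))).
apply: (@connected_range_const_on _ _ _ K).
- exact: adjoin_point_continuous.
- by case: hK.
- by move=> x y Kx Ky; rewrite !adjoin_point_id.
- exact: K_clopen_full.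
Qed.
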